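(* Let $x$ be a sequence of length $n$, let $i\in\{1,\ldots,n-1\}$ and $y=\tau(x,i)$. Suppose $x[i]>x[i+1]$. Then: (1) $\overrightarrow{b_y}=1$; (2) $\overleftarrow{b_y}=0$ if $\overleftarrow{a_x}=0$, and $\overleftarrow{b_y}=\overleftarrow{a_x}+1$ otherwise; (3) $\overrightarrow{a_y}=0$ if $\overrightarrow{b_x}=0$, and $\overrightarrow{a_y}=\overrightarrow{b_x}-1$ otherwise; (4) $\overleftarrow{a_y}\le n-i-1$ if $\overleftarrow{a_x}=0$, and $\overleftarrow{a_y}\le\overleftarrow{a_x}$ otherwise.
   Context: Sequences are finite sequences of pairwise distinct integers indexed from $1$. For $1\le i\le n-1$, $\tau(x,i)$ is the sequence obtained from $x$ by exchanging $x[i]$ and $x[i+1]$. The parent-distance table of $x$ is $\overrightarrow{PD}_x[k]=k-\max\{j<k : x[j]<x[k]\}$ if such $j$ exists and $0$ otherwise; the reverse parent-distance table is $\overleftarrow{PD}_x[k]=\min\{j : k<j\le n,\ x[j]<x[k]\}-k$ if such $j$ exists and $0$ otherwise. Notation (for $z\in\{x,y\}$): $\overrightarrow{a_z}=\overrightarrow{PD}_z[i]$, $\overrightarrow{b_z}=\overrightarrow{PD}_z[i+1]$, $\overleftarrow{a_z}=\overleftarrow{PD}_z[i+1]$, $\overleftarrow{b_z}=\overleftarrow{PD}_z[i]$ (in the reverse tables, $a$ refers to position $i+1$ and $b$ to position $i$). *)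

From mathcomp Require Import all_boot all_order all_algebra.
Set Implicit Arguments. Unset Strict Implicit. Unset Printing Implicit Defensive.
Import Order.TTheory GRing.Theory Num.Theory.

(* A sequence is a (finite) seq int of pairwise distinct integers; positions
   are 1-based: the k-th entry x[k] is [at x k] = nth 0 x (k-1). *)
Definition at_ (x : seq int) (k : nat) : int := nth 0%R x k.-1.

Definition tau (x : seq int) (i : nat) : seq int :=
  [seq at_ x (if j == i then i.+1 else if j == i.+1 then i else j)
     | j <- iota 1 (size x)].

Definition PDf (x : seq int) (k : nat) : nat :=
  let S := [seq j <- iota 1 k.-1 | (at_ x j < at_ x k)%R] in
  if S is [::] then 0 else k - \max_(j <- S) j.

Definition PDb (x : seq int) (k : nat) : nat :=
  let S := [seq j <- iota k.+1 (size x - k) | (at_ x j < at_ x k)%R] in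
  if S is [::] then 0 else \big[minn/(size x).+1]_(j <- S) j - k.

(* Swapping the descent x[i] > x[i+1] moves the smaller value to position i
   and the larger one to i+1, leaving every other entry in place.  Hence y[i]
   is the nearest smaller value left of y[i+1], and the candidate parents of
   y[i] on either side are exactly those of x[i+1], now measured from a
   position one step to the left.  Every position right of i+1 holding a value
   below x[i+1] also holds one below x[i] = y[i+1], so the reverse parent of
   y[i+1] is no farther than that of x[i+1], and it always lies inside the
   sequence. *)

From mathcomp Require Import all_boot all_order all_algebra zify.
Import Order.TTheory GRing.Theory Num.Theory.

Set Implicit Arguments.
Unset Strict Implicit.
Unset Printing Implicit Defensive.

Lemma iota1_rcons k : 0 < k -> iota 1 k = rcons (iota 1 k.-1) k.
Proof. by case: k => // k _; rewrite -[k.+1]addn1 iotaD cats1 add1n addn1. Qed.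

Lemma lt_bigminn_seq (N m : nat) (S : seq nat) :
  m < N -> {in S, forall j, m < j} -> m < \big[minn/N]_(j <- S) j.
Proof. by move=> ltmN ltmS; rewrite big_seq -minEnat; apply: (@lt_bigmin _ nat). Qed.

Lemma ge_bigminn_seq (N : nat) (S : seq nat) j :
  j \in S -> \big[minn/N]_(k <- S) k <= j.
Proof.
by move=> jS; rewrite -minEnat; apply: (@ge_bigmin_seq _ nat _ _ _ _ _ _ jS).
Qed.

Lemma sub_bigminn_seq (N : nat) (S T : seq nat) : {subset T <= S} ->
  \big[minn/N]_(j <- S) j <= \big[minn/N]_(j <- T) j.
Proof. by rewrite -minEnat; apply: (@sub_bigmin_seq _ nat). Qed.

Definition dist_from_max (k : nat) (S : seq nat) : nat :=
  if S is [::] then 0 else k - \max_(j <- S) j.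

(* [N] is only the unit of the big minimum: it does not affect the result when
   [S] is nonempty and bounded by [N]. *)
Definition dist_to_min (k N : nat) (S : seq nat) : nat :=
  if S is [::] then 0 else \big[minn/N]_(j <- S) j - k.

Lemma PDfE x k :
  PDf x k = dist_from_max k [seq j <- iota 1 k.-1 | (at_ x j < at_ x k)%R].
Proof. by []. Qed.

Lemma PDbE x k :
  PDb x k = dist_to_min k (size x).+1
              [seq j <- iota k.+1 (size x - k) | (at_ x j < at_ x k)%R].
Proof. by []. Qed.

Lemma dist_from_max_rcons k S :
  {in S, forall j, j <= k} -> dist_from_max k.+1 (rcons S k) = 1.
Proof.
move=> leSk; rewrite /dist_from_max.
have -> : \max_(j <- rcons S k) j = k.
  by rewrite big_rcons; apply/maxn_idPr/bigmax_leqP_seq => j /leSk.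
by case: S {leSk} => [|? ?]; rewrite /= subSnn.
Qed.

Lemma dist_from_max_pred k S : {in S, forall j, j < k} ->
  dist_from_max k S =
    if dist_from_max k.+1 S == 0 then 0 else dist_from_max k.+1 S - 1.
Proof.
case: S => [|a S] // ltSk /=.
have : \max_(j <- a :: S) j < k.
  have k_gt0 : 0 < k by apply: leq_ltn_trans (ltSk a (mem_head a S)).
  by rewrite -(prednK k_gt0) ltnS; apply/bigmax_leqP_seq => j /ltSk; lia.
(* [set] identifies copies of the big operator that differ only in implicit
   types, which [lia] would otherwise treat as distinct atoms. *)
set m := \max_(j <- _) j.
by case: eqP; lia.
Qed.

Lemma dist_to_min_pred k N S : k.+1 < N -> {in S, forall j, k.+1 < j} ->
  dist_to_min k N S =
    if dist_to_min k.+1 N S == 0 then 0 else (dist_to_min k.+1 N S).+1.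
Proof.
case: S => [|a S] // ltkN ltkS /=.
have := lt_bigminn_seq ltkN ltkS; set m := \big[minn/N]_(j <- _) j.
by case: eqP; lia.
Qed.

Lemma dist_to_min_subset k N S T : {subset T <= S} -> {in S, forall j, j < N} ->
  {in T, forall j, k < j} ->
  dist_to_min k N S <= if dist_to_min k N T == 0 then N - k - 1 else dist_to_min k N T.
Proof.
case: S => [|a S] subTS ltSN ltkT /=; first exact: leq0n.
have min_le_a := @ge_bigminn_seq N _ _ (mem_head a S).
have a_lt_N := ltSN a (mem_head a S).
case: T subTS ltkT => [|b T] subTS ltkT /=.
  by set m := \big[minn/N]_(j <- a :: S) j in min_le_a *; lia.
have min_mono := @sub_bigminn_seq N _ _ subTS.
have b_in_T := mem_head b T.
have lt_kN := ltn_trans (ltkT b b_in_T) (ltSN b (subTS b b_in_T)).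
have min_gt_k := lt_bigminn_seq lt_kN ltkT.
set m := \big[minn/N]_(j <- a :: S) j in min_le_a min_mono *.
set mT := \big[minn/N]_(j <- b :: T) j in min_mono min_gt_k *.
by case: eqP; lia.
Qed.

Lemma size_tau x i : size (tau x i) = size x.
Proof. by rewrite /tau size_map size_iota. Qed.

Lemma at_tau x i k : 0 < k <= size x ->
  at_ (tau x i) k = at_ x (if k == i then i.+1 else if k == i.+1 then i else k).
Proof.
move=> /andP[k_gt0 le_k_size]; rewrite /at_ /tau (nth_map 0) ?size_iota; last by lia.
by rewrite nth_iota ?add1n ?prednK //; lia.
Qed.

Section AdjacentDescent.

Variables (x : seq int) (i : nat).
Hypotheses (i_gt0 : 0 < i) (lt_i_size : i < size x).
Hypothesis descent : (at_ x i.+1 < at_ x i)%R.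

Local Notation y := (tau x i).

Lemma at_tau_l : at_ y i = at_ x i.+1.
Proof. by rewrite at_tau ?eqxx // i_gt0 ltnW. Qed.

Lemma at_tau_r : at_ y i.+1 = at_ x i.
Proof. by rewrite at_tau ?eqxx ?gtn_eqF //= lt_i_size. Qed.

Lemma at_tau_out j : 0 < j <= size x -> j != i -> j != i.+1 -> at_ y j = at_ x j.
Proof. by move=> rng /negbTE ne_ji /negbTE ne_jSi; rewrite at_tau // ne_ji ne_jSi. Qed.

Lemma filter_tau_prefix (P : pred int) :
  [seq j <- iota 1 i.-1 | P (at_ y j)] = [seq j <- iota 1 i.-1 | P (at_ x j)].
Proof.
by apply: eq_in_filter => j; rewrite mem_iota => rng; rewrite at_tau_out //; lia.
Qed.

Lemma filter_tau_suffix (P : pred int) :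
  [seq j <- iota i.+2 (size x - i.+1) | P (at_ y j)] =
  [seq j <- iota i.+2 (size x - i.+1) | P (at_ x j)].
Proof.
by apply: eq_in_filter => j; rewrite mem_iota => rng; rewrite at_tau_out //; lia.
Qed.

Lemma not_ascent : (at_ x i < at_ x i.+1)%R = false.
Proof. by rewrite ltNge ltW. Qed.

Lemma PDf_tau_succ : PDf y i.+1 = 1.
Proof.
rewrite PDfE (iota1_rcons i_gt0) filter_rcons at_tau_l at_tau_r descent.
by apply: dist_from_max_rcons => j; rewrite mem_filter mem_iota; lia.
Qed.

Lemma PDf_tau : PDf y i = if PDf x i.+1 == 0 then 0 else PDf x i.+1 - 1.
Proof.
rewrite !PDfE (iota1_rcons i_gt0) filter_rcons not_ascent at_tau_l.
rewrite (filter_tau_prefix (fun v => v < at_ x i.+1)%R).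
by apply: dist_from_max_pred => j; rewrite mem_filter mem_iota; lia.
Qed.

Lemma PDb_tau : PDb y i = if PDb x i.+1 == 0 then 0 else (PDb x i.+1).+1.
Proof.
rewrite !PDbE size_tau -(subnSK lt_i_size) [filter _ (iota _ _.+1)]/=.
rewrite at_tau_r at_tau_l not_ascent (filter_tau_suffix (fun v => v < at_ x i.+1)%R).
by apply: dist_to_min_pred => [|j]; rewrite ?mem_filter ?mem_iota; lia.
Qed.

Lemma PDb_tau_succ_le :
  PDb y i.+1 <= if PDb x i.+1 == 0 then size x - i - 1 else PDb x i.+1.
Proof.
rewrite !PDbE size_tau at_tau_r (filter_tau_suffix (fun v => v < at_ x i)%R).
rewrite -[size x - i]subSS.
apply: dist_to_min_subset => j; rewrite ?mem_filter ?mem_iota.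
- by case/andP=> lt_j ->; rewrite (lt_trans lt_j descent).
- by lia.
- by lia.
Qed.

End AdjacentDescent.

Theorem lemma2 (x : seq int) (i : nat) :
  uniq x -> 1 <= i -> i <= size x - 1 ->
  (at_ x i > at_ x i.+1)%R ->
  let n := size x in
  let y := tau x i in
  [/\ PDf y i.+1 = 1,
      PDb y i = (if PDb x i.+1 == 0 then 0 else (PDb x i.+1).+1),
      PDf y i = (if PDf x i.+1 == 0 then 0 else (PDf x i.+1) - 1)
    & PDb y i.+1 <= (if PDb x i.+1 == 0 then n - i - 1 else PDb x i.+1)].
Proof.
move=> _ i_gt0 le_i_size descent n y.
have lt_i_size : i < size x by lia.
split.
- exact: PDf_tau_succ.
- exact: PDb_tau.
- exact: PDf_tau.
- exact: PDb_tau_succ_le.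
Qed.
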